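(* Let $I=\{1,\dots,\ell\}$, $J=\{\ell+1,\dots,p\}$, let $h_1,\dots,h_p\colon\mathbb R^n\times\mathbb R^m\to\overline{\mathbb R}$ be given and define $\Gamma\colon\mathbb R^n\rightrightarrows\mathbb R^m$ by $\Gamma(x):=\{y\in\mathbb R^m\mid h_i(x,y)\le 0\ (i\in I),\ h_i(x,y)=0\ (i\in J)\}$. Let $(\bar x,\bar y)\in\operatorname{gph}\Gamma$ and suppose that $\Gamma$ is R-regular at $(\bar x,\bar y)$ with respect to $\operatorname{dom}\Gamma$. Furthermore, let $h_1,\dots,h_p$ be continuous at $(\bar x,\bar y)$ and let $h_1(x,\cdot),\dots,h_p(x,\cdot)\colon\mathbb R^m\to\mathbb R$ be continuous for each $x\in\operatorname{dom}\Gamma$ from a neighborhood of $\bar x$. Then $\Gamma$ is inner semicontinuous at $(\bar x,\bar y)$ with respect to $\operatorname{dom}\Gamma$.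
   Context: $\operatorname{dom}\Gamma:=\{x\mid\Gamma(x)\neq\emptyset\}$, $\operatorname{gph}\Gamma:=\{(x,y)\mid y\in\Gamma(x)\}$; $\|\cdot\|$ is the Euclidean norm and $\operatorname{dist}(y,A):=\inf\{\|z-y\|\mid z\in A\}$ (equal to $+\infty$ if $A=\emptyset$). $\Gamma$ is called R-regular at $(\bar x,\bar y)\in\operatorname{gph}\Gamma$ with respect to $\Omega\subset\mathbb R^n$ if there exist $\kappa>0$ and a neighborhood $U$ of $(\bar x,\bar y)$ such that for all $(x,y)\in U\cap(\Omega\times\mathbb R^m)$: $\operatorname{dist}(y,\Gamma(x))\le\kappa\max\{0,\max_{i\in I}h_i(x,y),\max_{i\in J}|h_i(x,y)|\}$. A set-valued map $\Upsilon$ is inner semicontinuous at $(\bar x,\bar y)\in\operatorname{gph}\Upsilon$ with respect to $\Omega$ if for every sequence $\{x^k\}\subset\Omega$ with $x^k\to\bar x$ there is a sequence $y^k\to\bar y$ with $y^k\in\Upsilon(x^k)$ for all sufficiently large $k$. *)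

(* R^n is modelled as row vectors 'rV[R]_n; the
   topology (neighborhoods, convergence, continuity) is the canonical one on
   'rV[R]_n and on products, which coincides with the Euclidean topology. *)
From HB Require Import structures.
From mathcomp Require Import all_boot all_order all_algebra.
From mathcomp Require Import all_classical all_reals all_analysis.
Set Implicit Arguments. Unset Strict Implicit. Unset Printing Implicit Defensive.
Import Order.TTheory GRing.Theory Num.Theory.
Import numFieldNormedType.Exports.
Local Open Scope classical_set_scope.
Local Open Scope ring_scope.

Definition enorm {R : realType} {n : nat} (v : 'rV[R]_n) : R :=
  Num.sqrt (\sum_(i < n) v ord0 i ^+ 2).

(* dist(y, A) = inf { ||z - y|| : z in A }, = +oo if A is empty *)
Definition edist {R : realType} {m : nat} (y : 'rV[R]_m) (A : set 'rV[R]_m)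
  : \bar R := ereal_inf [set (enorm (z - y))%:E | z in A].

(* Indices 'I_p (0-based): I = {i | i < l}, J = {i | l <= i}. *)
Definition Gamma {R : realType} {n m p : nat} (l : nat)
  (h : 'I_p -> 'rV[R]_n * 'rV[R]_m -> \bar R) (x : 'rV[R]_n) : set 'rV[R]_m :=
  [set y | (forall i : 'I_p, (i < l)%N -> (h i (x, y) <= 0)%E) /\
           (forall i : 'I_p, (l <= i)%N -> h i (x, y) = 0%E)].

Definition domG {R : realType} {n m p : nat} (l : nat)
  (h : 'I_p -> 'rV[R]_n * 'rV[R]_m -> \bar R) : set 'rV[R]_n :=
  [set x | Gamma l h x !=set0].

Definition residual {R : realType} {n m p : nat} (l : nat)
  (h : 'I_p -> 'rV[R]_n * 'rV[R]_m -> \bar R) (x : 'rV[R]_n) (y : 'rV[R]_m)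
  : \bar R :=
  Order.max 0%E
    (Order.max (\big[Order.max/-oo%E]_(i < p | (i < l)%N) h i (x, y))
               (\big[Order.max/-oo%E]_(i < p | (l <= i)%N) `|h i (x, y)|%E)).

Definition R_regular {R : realType} {n m p : nat} (l : nat)
  (h : 'I_p -> 'rV[R]_n * 'rV[R]_m -> \bar R) (xb : 'rV[R]_n) (yb : 'rV[R]_m)
  (Omega : set 'rV[R]_n) : Prop :=
  exists kappa : R, 0 < kappa /\
  exists U : set ('rV[R]_n * 'rV[R]_m), nbhs (xb, yb) U /\
    forall x y, U (x, y) -> Omega x ->
      (edist y (Gamma l h x) <= kappa%:E * residual l h x y)%E.

Definition inner_semicontinuous {R : realType} {n m : nat}
  (Ups : 'rV[R]_n -> set 'rV[R]_m) (xb : 'rV[R]_n) (yb : 'rV[R]_m)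
  (Omega : set 'rV[R]_n) : Prop :=
  forall xk : nat -> 'rV[R]_n, (forall k, Omega (xk k)) -> xk @ \oo --> xb ->
    exists yk : nat -> 'rV[R]_m, yk @ \oo --> yb /\
      \forall k \near \oo, Ups (xk k) (yk k).

From Pilot Require Import Defs.
From HB Require Import structures.
From mathcomp Require Import all_boot all_order all_algebra.
From mathcomp Require Import all_classical all_reals all_analysis.
Import Order.TTheory GRing.Theory Num.Theory.
Import numFieldNormedType.Exports.
Local Open Scope classical_set_scope.
Local Open Scope ring_scope.

(* By R-regularity, dist(ybar, Gamma(x)) <= kappa * residual(x, ybar) for x in
   dom Gamma near xbar, and the residual at (x, ybar) tends to 0 as x -> xbar,
   because each h_i is continuous at the feasible point (xbar, ybar).  Hence
   along any sequence x_k -> xbar in dom Gamma one can pick y_k in Gamma(x_k)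
   with ||y_k - ybar|| < dist(ybar, Gamma(x_k)) + 1/(k+1), and y_k -> ybar. *)

Lemma mx_norm_le_enorm {R : realType} {m : nat} (v : 'rV[R]_m) :
  `|v| <= enorm v.
Proof.
rewrite [`|v|]mx_normrE; apply: bigmax_le; first exact: sqrtr_ge0.
move=> [i j] _ /=; rewrite (ord1 i) -sqrtr_sqr /enorm ler_sqrt; last first.
  by apply: sumr_ge0 => k _; exact: sqr_ge0.
by rewrite (bigD1 j) //= lerDl; apply: sumr_ge0 => k _; exact: sqr_ge0.
Qed.

(* Qualified because MathComp-Analysis defines its own [edist]. *)
Section EuclideanDistance.
Variables (R : realType) (m : nat).
Implicit Types (y : 'rV[R]_m) (A : set 'rV[R]_m).

Lemma edist_ge0 y A : (0 <= Defs.edist y A)%E.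
Proof. by apply/ereal_infP => _ [z _ <-]; rewrite lee_fin sqrtr_ge0. Qed.

Lemma edist_fin_num y {A} : A !=set0 -> Defs.edist y A \is a fin_num.
Proof.
move=> [z Az]; rewrite ge0_fin_numE ?edist_ge0 //.
by apply: le_lt_trans (ltry (enorm (z - y))); apply: ereal_inf_lbound; exists z.
Qed.

Lemma edist_approx y A (e : R) : A !=set0 -> 0 < e ->
  exists z, A z /\ ((enorm (z - y))%:E < Defs.edist y A + e%:E)%E.
Proof.
move=> A0 e0; have fin_dist := edist_fin_num y A0.
by have [_ [z Az <-] lt_z] := lb_ereal_inf_adherent e0 fin_dist; exists z.
Qed.

End EuclideanDistance.

Lemma inner_semicontinuous_edist {R : realType} {n m : nat}
    (Ups : 'rV[R]_n -> set 'rV[R]_m) (xb : 'rV[R]_n) (yb : 'rV[R]_m)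
    (Omega : set 'rV[R]_n) :
  (forall x, Omega x -> Ups x !=set0) ->
  (forall xk : nat -> 'rV[R]_n, (forall k, Omega (xk k)) -> xk @ \oo --> xb ->
     forall e : R, 0 < e ->
       \forall k \near \oo, (Defs.edist yb (Ups (xk k)) < e%:E)%E) ->
  inner_semicontinuous Ups xb yb Omega.
Proof.
move=> Ups0 edist_to0 xk Omega_xk xk_xb.
have approx k : exists y, Ups (xk k) y /\
    ((enorm (y - yb))%:E < Defs.edist yb (Ups (xk k)) + (k.+1%:R^-1)%:E)%E.
  by apply: edist_approx; [exact: Ups0 | rewrite invr_gt0 ltr0Sn].
have [yk /all_and2 [Ups_yk yk_close]] := choice (fun k => approx k).
exists yk; split; last exact: nearW.
apply/cvgrPdist_lt => e e0; have e20 : 0 < e / 2 by rewrite divr_gt0.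
have small_dist := edist_to0 _ Omega_xk xk_xb _ e20.
have small_inv := near_infty_natSinv_lt (PosNum e20).
near=> k; rewrite distrC; apply: le_lt_trans (mx_norm_le_enorm _) _.
rewrite -lte_fin (splitr e) EFinD; apply: lt_le_trans (yk_close k) _.
apply: leeD; apply: ltW; last by rewrite lte_fin; near: k.
by near: k.
Unshelve. all: by end_near.
Qed.

Lemma nbhs_pair_fst {T U : topologicalType} {a : T} {b : U} {P : set (T * U)} :
  nbhs (a, b) P -> \forall x \near a, P (x, b).
Proof.
case=> -[A B] /= [A_a B_b] AB_P; apply: filterS A_a => x Ax.
by apply: AB_P; split=> //; exact: nbhs_singleton.
Qed.

Section Residual.
Context {R : realType} {n m p l : nat} {h : 'I_p -> 'rV[R]_n * 'rV[R]_m -> \bar R}.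

Lemma residual_lt x y (e : R) : 0 < e ->
  (forall i, (h i (x, y) < e%:E)%E) ->
  (forall i : 'I_p, (l <= i)%N -> (- e%:E < h i (x, y))%E) ->
  (residual l h x y < e%:E)%E.
Proof.
move=> e0 h_lt h_gt.
have big_lt (P : pred 'I_p) F : (forall i, P i -> (F i < e%:E)%E) ->
    (\big[Order.max/-oo%E]_(i < p | P i) F i < e%:E)%E.
  move=> F_lt; apply: (big_ind (fun t => t < e%:E)%E) => //; first exact: ltNye.
  by move=> a b a_lt b_lt; rewrite gt_max a_lt b_lt.
rewrite /residual !gt_max lte_fin e0 !big_lt // => i l_le_i.
by rewrite lte_absl h_lt andbT h_gt.
Qed.

Lemma residual_near_lt {xb : 'rV[R]_n} {yb : 'rV[R]_m} {e : R} :
  Gamma l h xb yb -> (forall i, {for (xb, yb), continuous (h i)}) -> 0 < e ->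
  \forall z \near (xb, yb), (residual l h z.1 z.2 < e%:E)%E.
Proof.
move=> [hI hJ] h_cont e0.
have near_h i : \forall z \near (xb, yb),
    (h i z < e%:E)%E /\ ((l <= i)%N -> (- e%:E < h i z)%E).
  have h_le0 : (h i (xb, yb) <= 0)%E by case: (leqP l i) => [/hJ -> | /hI].
  have lt_e : (h i (xb, yb) < e%:E)%E by apply: le_lt_trans h_le0 _; rewrite lte_fin.
  have near_lt := h_cont i _ (open_ereal_lt' lt_e).
  case: (leqP l i) => [l_le_i | _]; last first.
    by near=> z; split=> //; near: z; exact: near_lt.
  have gt_e : (- e%:E < h i (xb, yb))%E by rewrite hJ // lteNl oppe0 lte_fin.
  near=> z; split=> [|_]; near: z; first exact: near_lt.
  exact: h_cont i _ (open_ereal_gt' gt_e).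
near=> z; have near_hi : forall i,
    (h i z < e%:E)%E /\ ((l <= i)%N -> (- e%:E < h i z)%E).
  by near: z; exact: filter_forall near_h.
apply: residual_lt => // i; rewrite -surjective_pairing.
  exact: (near_hi i).1.
exact: (near_hi i).2.
Unshelve. all: by end_near.
Qed.

Lemma R_regular_edist_near_lt {xb : 'rV[R]_n} {yb : 'rV[R]_m}
    {Omega : set 'rV[R]_n} {e : R} :
  R_regular l h xb yb Omega -> Gamma l h xb yb ->
  (forall i, {for (xb, yb), continuous (h i)}) -> 0 < e ->
  \forall x \near xb, Omega x -> (Defs.edist yb (Gamma l h x) < e%:E)%E.
Proof.
move=> [kap [kap0 [U [U_nbhs reg]]]] gph h_cont e0.
have near_U := nbhs_pair_fst U_nbhs.
have near_res := nbhs_pair_fst (residual_near_lt gph h_cont (divr_gt0 e0 kap0)).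
near=> x => Omega_x; apply: le_lt_trans (reg x yb _ Omega_x) _; first by near: x.
rewrite -(divfK (lt0r_neq0 kap0) e) mulrC EFinM lte_pmul2l ?lte_fin //.
by near: x.
Unshelve. all: by end_near.
Qed.

End Residual.

Theorem lemma2p5 (R : realType) (n m p l : nat) (hlp : (l <= p)%N)
  (h : 'I_p -> 'rV[R]_n * 'rV[R]_m -> \bar R)
  (xb : 'rV[R]_n) (yb : 'rV[R]_m)
  (hgph : Gamma l h xb yb)
  (hreg : R_regular l h xb yb (domG l h))
  (hcont : forall i : 'I_p, {for (xb, yb), continuous (h i)})
  (hcont2 : exists V : set 'rV[R]_n, nbhs xb V /\
     forall x, V x -> domG l h x -> forall i : 'I_p,
       (forall y, h i (x, y) \is a fin_num) /\
       continuous (fun y : 'rV[R]_m => fine (h i (x, y)))) :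
  inner_semicontinuous (Gamma l h) xb yb (domG l h).
Proof.
apply: inner_semicontinuous_edist => // xk dom_xk xk_xb e e0.
have near_edist := xk_xb _ (R_regular_edist_near_lt hreg hgph hcont e0).
by near=> k; move: (dom_xk k); near: k; exact: near_edist.
Unshelve. all: by end_near.
Qed.
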